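(* Let $\theta\in\Omega(W)$ be the linear form $y=(y_0,y_1,\dots)\mapsto\alpha_0(0)$, where $y_0=\alpha_0e+\beta_0X^rf$ with $\alpha_0,\beta_0\in k[\![X]\!]$. Then for every $\begin{pmatrix}a&b\\0&d\end{pmatrix}\in\mathrm B\cap\mathrm K\mathrm Z$, $$\begin{pmatrix}a&b\\0&d\end{pmatrix}\star\theta=\chi(ad)\,\omega^r(a)\,\theta.$$
   Context: $p$ prime, $k$ finite extension of $\mathbf F_p$, $r\in\{0,\dots,p-1\}$, $\chi=\omega^s\mu_\lambda$ ($\lambda\in k^\times$), viewed also as characters of $\mathbf Q_p^\times$ by $\omega(a)=ap^{-\mathrm{val}(a)}\bmod p$, $\mu_\lambda(a)=\lambda^{\mathrm{val}(a)}$. $W=\rho(r,\chi)=\mathrm{ind}(\omega_2^{r+1})\otimes\chi$ (irreducible 2-dimensional, determinant of $\mathrm{ind}(\omega_2^{r+1})$ equal to $\omega^{r+1}$, restriction to inertia $\omega_2^{r+1}\oplus\omega_2^{p(r+1)}$). $\mathrm D(W)$ is its étale $(\phi,\Gamma)$-module over $k(\!(X)\!)$ with basis $e,f$ such that $\phi(e)=\lambda f$, $\phi(f)=-\lambda X^{-(r+1)(p-1)}e$, $\gamma(e)=\omega(\gamma)^sf_\gamma^{(r+1)/(p+1)}e$, $\gamma(f)=\omega(\gamma)^sf_\gamma^{p(r+1)/(p+1)}f$ with $f_\gamma(X)=\omega(\gamma)X/\gamma(X)$, $\gamma(X)=(1+X)^{\chi_{\mathrm{cycl}}(\gamma)}-1$;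 $\psi$ is the left inverse of $\phi$ with $\psi(a\phi(d))=\psi(a)d$ (on $k(\!(X)\!)$: $\psi(\sum_{i=0}^{p-1}(1+X)^i\phi(a_i))=a_0$). One has $\mathrm D^\sharp(W)=k[\![X]\!]e\oplus X^rk[\![X]\!]f$. $\varprojlim_\psi\mathrm D^\sharp(W)$ is the set of $(v_0,v_1,\dots)$, $v_i\in\mathrm D^\sharp(W)$, $\psi(v_{i+1})=v_i$, with the action of $\mathrm B=\mathrm B_2(\mathbf Q_p)$: $(\mathrm{diag}(x,x)\star v)_i=(\omega^r\chi^2)^{-1}(x)v_i$; $(\mathrm{diag}(1,p^j)\star v)_i=v_{i-j}$ (meaning $\psi^{j-i}(v_0)$ if $i<j$); $(\mathrm{diag}(1,a)\star v)_i=\gamma_a^{-1}(v_i)$ for $a\in\mathbf Z_p^\times$, $\chi_{\mathrm{cycl}}(\gamma_a)=a$; $(\begin{pmatrix}1&z\\0&1\end{pmatrix}\star v)_i=\psi^j((1+X)^{p^{i+j}z}v_{i+j})$ for $i+j\ge-\mathrm{val}(z)$. $\Omega(W)$ is its continuous $k$-dual, with $(g\star\theta)(y)=\theta(g^{-1}\star y)$. $\mathrm K=\mathrm{GL}_2(\mathbf Z_p)$, $\mathrm Z$ the centre of $\mathrm{GL}_2(\mathbf Q_p)$. *)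

From HB Require Import structures.
From mathcomp Require Import all_boot all_order all_algebra.
Set Implicit Arguments. Unset Strict Implicit. Unset Printing Implicit Defensive.
Import GRing.Theory.
Local Open Scope ring_scope.

(* x n is the residue of x modulo p^n (a natural number < p^n).              *)
Definition zp_seq := nat -> nat.
Definition is_zp (p : nat) (x : zp_seq) : Prop :=
  forall n, (x n < p ^ n)%N /\ (x n.+1 %% p ^ n)%N = x n.
Definition zp_unit (x : zp_seq) : bool := x 1%N != 0%N.
Definition zp_of_nat (p q : nat) : zp_seq := fun n => (q %% p ^ n)%N.
Definition zp_mul (p : nat) (x y : zp_seq) : zp_seq :=
  fun n => (x n * y n %% p ^ n)%N.
Definition zp_opp (p : nat) (x : zp_seq) : zp_seq :=
  fun n => ((p ^ n - x n) %% p ^ n)%N.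
(* inverse of a unit (Euler) *)
Definition zp_inv (p : nat) (x : zp_seq) : zp_seq :=
  fun n => (x n ^ (totient (p ^ n)).-1 %% p ^ n)%N.

Definition pser (k : nzRingType) := nat -> k.
Definition ptrunc (k : nzRingType) (N : nat) (f : pser k) : {poly k} :=
  \poly_(i < N) f i.
Definition pconst (k : nzRingType) (c : k) : pser k :=
  fun N => if N == 0%N then c else 0.
Definition pscale (k : nzRingType) (c : k) (f : pser k) : pser k :=
  fun N => c * f N.
Definition pXpow (k : nzRingType) (m : nat) (f : pser k) : pser k :=
  fun N => if (m <= N)%N then f (N - m)%N else 0.
Definition pmul (k : nzRingType) (f g : pser k) : pser k :=
  fun N => (ptrunc N.+1 f * ptrunc N.+1 g)`_N.
Definition pexpn (k : nzRingType) (f : pser k) (m : nat) : pser k :=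
  fun N => (ptrunc N.+1 f ^+ m)`_N.
(* g(h(X)), for h with zero constant term *)
Definition pcomp (k : nzRingType) (g h : pser k) : pser k :=
  fun N => (ptrunc N.+1 g \Po ptrunc N.+1 h)`_N.
(* inverse of a power series with invertible constant term u0:
   u^-1 = u0^-1 * sum_m (1 - u/u0)^m *)
Definition pinv (k : fieldType) (u : pser k) : pser k :=
  fun N => (u 0%N)^-1 *
    (\sum_(m < N.+1) (1 - (u 0%N)^-1 *: ptrunc N.+1 u) ^+ m)`_N.
(* u^c for u a principal unit (u(0) = 1) and c in Z_p, in characteristic p:
   u^c = lim u^(c mod p^n); mod X^(N+1) one may use c mod p^N. *)
Definition ppowZp (k : nzRingType) (u : pser k) (c : zp_seq) : pser k :=
  fun N => (ptrunc N.+1 u ^+ c N)`_N.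
Definition onepX (k : nzRingType) : pser k := fun N => (N <= 1)%N%:R.

Definition omega (k : nzRingType) (u : zp_seq) : k := (u 1%N)%:R.
(* An element of Q_p^x is written p^(x.1) * x.2 with x.2 in Z_p^x. *)
Definition qpx := (int * zp_seq)%type.
Definition qpx_mul (p : nat) (x y : qpx) : qpx :=
  (x.1 + y.1, zp_mul p x.2 y.2)%R.
(* omega(a) = a p^-val(a) mod p ; mu_lam(a) = lam^val(a) *)
Definition omegaQ (k : unitRingType) (x : qpx) : k := omega k x.2.
Definition chi (k : unitRingType) (s : int) (lam : k) (x : qpx) : k :=
  omegaQ k x ^ s * lam ^ x.1.

(* gamma_a with chi_cycl(gamma_a) = a in Z_p^x *)
(* gamma_a(X)/X = ((1+X)^a - 1)/X *)
Definition gdivX (k : nzRingType) (a : zp_seq) : pser k :=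
  fun N => ppowZp (onepX k) a N.+1.
Definition gammaX (k : nzRingType) (a : zp_seq) : pser k := pXpow 1 (gdivX k a).
(* f_gamma = omega(gamma) X / gamma(X) *)
Definition fgamma (k : fieldType) (a : zp_seq) : pser k :=
  pscale (omega k a) (pinv (gdivX k a)).
Definition ex1 (p r : nat) : zp_seq :=
  zp_mul p (zp_of_nat p r.+1) (zp_inv p (zp_of_nat p p.+1)).
Definition ex2 (p r : nat) : zp_seq := zp_mul p (zp_of_nat p p) (ex1 p r).

(* An element of D^sharp(W) = k[[X]] e + X^r k[[X]] f is stored as the pair
   (alpha, beta), standing for alpha e + beta X^r f. *)
Definition Dsharp (k : nzRingType) := (pser k * pser k)%type.

(* gamma_a(alpha e + X^r beta f)
   = omega(a)^s gamma(alpha) f_g^((r+1)/(p+1)) e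
     + X^r (gamma(X)/X)^r omega(a)^s gamma(beta) f_g^(p(r+1)/(p+1)) f *)
Definition gammaD (k : fieldType) (p r : nat) (s : int) (a : zp_seq)
    (v : Dsharp k) : Dsharp k :=
  let c := omega k a ^ s in
  (pscale c (pmul (pcomp v.1 (gammaX k a)) (ppowZp (fgamma k a) (ex1 p r))),
   pscale c (pmul (pexpn (gdivX k a) r)
               (pmul (pcomp v.2 (gammaX k a)) (ppowZp (fgamma k a) (ex2 p r))))).

(* psi on k[[X]]: psi(sum_{i<p} (1+X)^i phi(a_i)) = a_0, with phi(X) = X^p.
   Explicitly  [X^m] psi(f) = sum_{j<p} (-1)^j [X^(pm+j)] f. *)
Definition psi (k : nzRingType) (p : nat) (f : pser k) : pser k :=
  fun m => \sum_(j < p) (-1) ^+ j * f (p * m + j)%N.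
(* psi on the lattice k[[X]] e + k[[X]] f of D(W), pairs (A,B) = A e + B f;
   forced by psi(a phi(d)) = psi(a) d, phi(e) = lam f,
   phi(f) = -lam X^(-(r+1)(p-1)) e:
   psi(A e + B f) = lam^-1 psi(B) e - lam^-1 psi(X^((r+1)(p-1)) A) f *)
Definition psiD (k : fieldType) (p r : nat) (lam : k) (v : pser k * pser k)
    : pser k * pser k :=
  (pscale lam^-1 (psi p v.2),
   pscale (- lam^-1) (psi p (pXpow (r.+1 * p.-1) v.1))).
Definition sharp_incl (k : nzRingType) (r : nat) (v : Dsharp k)
    : pser k * pser k := (v.1, pXpow r v.2).

Definition in_limit (k : fieldType) (p r : nat) (lam : k)
    (y : nat -> Dsharp k) : Prop :=
  forall i, psiD p r lam (sharp_incl r (y i.+1)) = sharp_incl r (y i).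

(* diag(x,x), x in Q_p^x : multiplication by (omega^r chi^2)^-1 (x) *)
Definition actZ (k : fieldType) (p r : nat) (s : int) (lam : k) (x : qpx)
    (y : nat -> Dsharp k) : nat -> Dsharp k :=
  let c := (omegaQ k x ^+ r * chi s lam x ^+ 2)^-1 in
  fun i => (pscale c (y i).1, pscale c (y i).2).
(* (1 z; 0 1) for z in Z_p: (.)_i = psi^0((1+X)^(p^i z) y_i)  (j = 0) *)
Definition actN (k : fieldType) (p : nat) (z : zp_seq)
    (y : nat -> Dsharp k) : nat -> Dsharp k :=
  fun i => let g := ppowZp (onepX k) (zp_mul p (zp_of_nat p (p ^ i)) z) in
           (pmul g (y i).1, pmul g (y i).2).
(* diag(1,t), t in Z_p^x : gamma_t^-1 = gamma_(t^-1) *)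
Definition actT (k : fieldType) (p r : nat) (s : int) (t : zp_seq)
    (y : nat -> Dsharp k) : nat -> Dsharp k :=
  fun i => gammaD p r s (zp_inv p t) (y i).

(* Elements of B cap KZ: g = p^n (ua beta; 0 ud) with n in Z, ua, ud in Z_p^x,
   beta in Z_p, i.e. a = p^n ua, b = p^n beta, d = p^n ud. *)
Record bkz := BKZ { bk_n : int; bk_ua : zp_seq; bk_ud : zp_seq; bk_beta : zp_seq }.
Definition bkz_a (g : bkz) : qpx := (bk_n g, bk_ua g).
Definition bkz_d (g : bkz) : qpx := (bk_n g, bk_ud g).
Definition bkz_inv (p : nat) (g : bkz) : bkz :=
  BKZ (- bk_n g) (zp_inv p (bk_ua g)) (zp_inv p (bk_ud g))
      (zp_opp p (zp_mul p (bk_beta g)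
                   (zp_mul p (zp_inv p (bk_ua g)) (zp_inv p (bk_ud g))))).
(* g = diag(a,a) (1 b/d; 0 1) diag(1, d/a), acting by composition *)
Definition act_bkz (k : fieldType) (p r : nat) (s : int) (lam : k) (g : bkz)
    (y : nat -> Dsharp k) : nat -> Dsharp k :=
  actZ p r s lam (bkz_a g)
    (actN p (zp_mul p (bk_beta g) (zp_inv p (bk_ud g)))
       (actT p r s (zp_mul p (bk_ud g) (zp_inv p (bk_ua g))) y)).

Definition star_form (k : fieldType) (p r : nat) (s : int) (lam : k) (g : bkz)
    (th : (nat -> Dsharp k) -> k) : (nat -> Dsharp k) -> k :=
  fun y => th (act_bkz p r s lam (bkz_inv p g) y).

Definition theta0 (k : nzRingType) (y : nat -> Dsharp k) : k := (y 0%N).1 0%N.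

From Pilot Require Import Defs.
From HB Require Import structures.
From mathcomp Require Import all_boot all_order all_algebra.
From mathcomp Require Import ring.
Set Implicit Arguments. Unset Strict Implicit. Unset Printing Implicit Defensive.
Import GRing.Theory.
Local Open Scope ring_scope.

(* The linear form theta0 only sees the constant term alpha_0(0) of the level-0
   component of y, and every power-series operation used to define the action of
   B on the projective limit acts on constant terms by plain multiplication.  From these we get how each of the three elementary
   factors of g^-1 (centre, unipotent, torus) rescales theta0: the centre by
   (omega^r chi^2)^-1, the unipotent part trivially (1 + X has constant term 1),
   the torus diag(1, t) by omega(t)^-s.  The theorem is the product of these
   three scalars, rewritten as chi(ad) omega^r(a) with the character identities. *)

Lemma ptrunc1 (k : nzRingType) (f : pser k) : ptrunc 1 f = (f 0%N)%:P.
Proof. by apply/polyP => -[|i]; rewrite coef_poly coefC. Qed.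

Lemma pmul_const (k : nzRingType) (f g : pser k) : pmul f g 0%N = f 0%N * g 0%N.
Proof. by rewrite /pmul !ptrunc1 -polyCM coefC. Qed.

Lemma pcomp_const (k : nzRingType) (f g : pser k) : Defs.pcomp f g 0%N = f 0%N.
Proof. by rewrite /Defs.pcomp !ptrunc1 comp_polyC coefC. Qed.

Lemma ppowZp_const (k : nzRingType) (f : pser k) (c : zp_seq) :
  ppowZp f c 0%N = f 0%N ^+ c 0%N.
Proof. by rewrite /ppowZp !ptrunc1 -rmorphXn coefC. Qed.

Lemma onepX_pow_const (k : nzRingType) (c : zp_seq) :
  ppowZp (onepX k) c 0%N = 1.
Proof. by rewrite ppowZp_const expr1n. Qed.

Lemma zp_mul_level0 (p : nat) (x y : zp_seq) : zp_mul p x y 0%N = 0%N.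
Proof. by rewrite /zp_mul expn0 modn1. Qed.

Section Omega.

Variables (p : nat) (k : fieldType).
Hypotheses (p_prime : prime p) (p_char : p \in [pchar k]).

Lemma omega_mul (x y : zp_seq) :
  omega k (zp_mul p x y) = omega k x * omega k y.
Proof. by rewrite /omega /zp_mul expn1 (GRing.natr_mod_pchar p_char) natrM. Qed.

Lemma omega_neq0 (x : zp_seq) : is_zp p x -> zp_unit x -> omega k x != 0.
Proof.
move=> /(_ 1%N) [x1_lt _]; rewrite expn1 in x1_lt.
rewrite /zp_unit /omega -(dvdn_pcharf p_char) => x1_neq0.
by apply/negP => /dvdn_leq; rewrite lt0n x1_neq0 leqNgt x1_lt => /(_ isT).
Qed.

Lemma natr_fermat (m : nat) : (m%:R : k) != 0 -> (m%:R : k) ^+ p.-1 = 1.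
Proof.
move=> w_neq0; apply: (mulfI w_neq0); rewrite mulr1 -exprS prednK ?prime_gt0 //.
by rewrite -(pFrobenius_autE p_char) pFrobenius_aut_nat.
Qed.

(* zp_inv is computed by Euler's theorem; mod p it is x^(p-2). *)
Lemma omega_inv (x : zp_seq) :
  omega k x != 0 -> omega k (zp_inv p x) = (omega k x)^-1.
Proof.
rewrite /omega /zp_inv expn1 (GRing.natr_mod_pchar p_char) natrX totient_prime //.
move=> w_neq0; apply: (mulfI w_neq0); rewrite divff // -exprS.
have -> : p.-2.+1 = p.-1 by case: p p_prime => [|[|q]].
exact: natr_fermat.
Qed.

End Omega.

Section Chi.

Variables (p : nat) (k : fieldType) (s : int) (lam : k).
Hypotheses (p_prime : prime p) (p_char : p \in [pchar k]) (lam_neq0 : lam != 0).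

Lemma chi_mul (x y : qpx) :
  chi s lam (qpx_mul p x y) = chi s lam x * chi s lam y.
Proof.
rewrite /chi /omegaQ /qpx_mul /= omega_mul // expfzMl expfzDr //.
by rewrite mulrACA.
Qed.

Lemma chi_inv (n : int) (u : zp_seq) : omega k u != 0 ->
  chi s lam (- n, zp_inv p u) = (chi s lam (n, u))^-1.
Proof.
move=> u_neq0; rewrite /chi /omegaQ /= omega_inv // invfM.
by rewrite exprz_inv !invr_expz.
Qed.

Lemma chi_unit_change (n : int) (u v : zp_seq) : omega k u != 0 ->
  chi s lam (n, v) = chi s lam (n, u) * (omega k v / omega k u) ^ s.
Proof.
move=> u_neq0; rewrite /chi /omegaQ /= expfzMl -expfV.
by rewrite [RHS]mulrC -mulrA mulKf // expfz_neq0.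
Qed.

End Chi.

Section ThetaEigen.

Variables (p r : nat) (k : fieldType) (s : int) (lam : k).

Lemma theta0_actZ (x : qpx) (y : nat -> Dsharp k) :
  theta0 (actZ p r s lam x y) = (omegaQ k x ^+ r * chi s lam x ^+ 2)^-1 * theta0 y.
Proof. by []. Qed.

(* The unipotent (1 z; 0 1) multiplies by a principal unit (1+X)^(p^i z). *)
Lemma theta0_actN (z : zp_seq) (y : nat -> Dsharp k) :
  theta0 (actN p z y) = theta0 y.
Proof. by rewrite /theta0 /actN /= pmul_const onepX_pow_const mul1r. Qed.

(* diag(1, t) acts through gamma_(t^-1); on constant terms gamma is trivial and
   f_gamma^((r+1)/(p+1)) contributes 1 (modulo X its exponent is read modulo
   p^0 = 1), leaving omega(t^-1)^s. *)
Lemma theta0_actT (t : zp_seq) (y : nat -> Dsharp k) :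
  theta0 (actT p r s t y) = omega k (zp_inv p t) ^ s * theta0 y.
Proof.
rewrite /theta0 /actT /gammaD /= /pscale pmul_const pcomp_const ppowZp_const.
by rewrite /ex1 zp_mul_level0 expr0 mulr1.
Qed.

Lemma theta0_act_bkz (g : bkz) (y : nat -> Dsharp k) :
  theta0 (act_bkz p r s lam g y)
  = (omegaQ k (bkz_a g) ^+ r * chi s lam (bkz_a g) ^+ 2)^-1
    * omega k (zp_inv p (zp_mul p (bk_ud g) (zp_inv p (bk_ua g)))) ^ s * theta0 y.
Proof. by rewrite theta0_actZ theta0_actN theta0_actT mulrA. Qed.

End ThetaEigen.

Theorem mainTheorem7 (p : nat) (k : finFieldType) (r : nat) (s : int) (lam : k)
    (n : int) (ua ud beta : zp_seq) :
  prime p -> p \in [pchar k] -> (r <= p.-1)%N -> lam != 0 ->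
  is_zp p ua -> is_zp p ud -> is_zp p beta -> zp_unit ua -> zp_unit ud ->
  forall y : nat -> Dsharp k, in_limit p r lam y ->
    star_form p r s lam (BKZ n ua ud beta) (@theta0 k) y
    = chi s lam (qpx_mul p (bkz_a (BKZ n ua ud beta)) (bkz_d (BKZ n ua ud beta)))
      * omegaQ k (bkz_a (BKZ n ua ud beta)) ^+ r * theta0 y.
Proof.
move=> p_prime p_char _ lam_neq0 ua_zp ud_zp _ ua_unit ud_unit y _.
have u_neq0 := omega_neq0 p_char ua_zp ua_unit.
have v_neq0 := omega_neq0 p_char ud_zp ud_unit.
rewrite /star_form theta0_act_bkz /bkz_a /bkz_d /= /omegaQ /=.
rewrite chi_inv // chi_mul // [chi s lam (n, ud)](chi_unit_change _ _ _ _ u_neq0).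
rewrite !(omega_mul p_char, omega_inv p_prime p_char) ?mulf_neq0 ?invr_eq0 //.
rewrite invf_div invrK [_^-1 * omega k ud]mulrC.
move: (chi s lam (n, ua)) ((omega k ud / omega k ua) ^ s) => c ratio.
rewrite !exprVn !invfM !invrK.
ring.
Qed.
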